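(* Let $C_2$ be the 2-chain and $V$ the vee poset. Then $[C_2\odot V]'=\{S_3|_{0,1}\}$: the only poset $P$ with $P\oslash' V\cong C_2$ and $P\not\cong C_2$ is the poset $S_3|_{0,1}$.
   Context: $C_2=\{x<y\}$. The vee $V$ is the 3-element poset $\{x,y,z\}$ with $x<y$, $x<z$ (one minimal element below two maximal elements). $S_3|_{0,1}$ is the 10-element poset consisting of the four 1-element subsets and the six 2-element subsets of $\{1,2,3,4\}$, ordered by inclusion (the vertices and edges of a tetrahedron). Notation for a poset $P$: $J^-(a)=\{c:c\le a\}$, $J^+(a)=\{c:a\le c\}$; $\ell(X)$ is the cardinality of a longest chain of a poset $X$. A subset $A$ of a poset $X$ is maximally ordered in $X$ if $|\{(a,b)\in A\times A:a<b\}|$ is maximal among subsets of $X$ of cardinality $|A|$. $A\subseteq P$ is linked if for all $a<b$ in $A$, either $b$ covers $a$ or there exists $c\in J^+(a)\cap J^-(b)$ with $c\in A$. For $\sigma\in\mathrm{Aut}(P)$, $\Sigma(\sigma)=\{a:\sigma(a)\ne a\}$. For finite $Q$ and $r\ge2$: $\sigma$ is a $(Q,r)$-generator if there exist subsets $S_0,\dots,S_{r-1}\subset\Sigma(\sigma)$, each isomorphic to $Q$, which are smallest maximally ordered subsets of $\Sigma(\sigma)$ with $\sigma(S_i)=S_{(i+1)\bmod r}$, $\ell(S_i)=\ell(\Sigma(\sigma))$, $\bigcup_iS_i=\Sigma(\sigma)$; distinct $S_i,S_j$ are $(Q,r)$-symmetric subsets. Elements $a,b$ are $(Q,r,0)$-symmetric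 if $a=b$; $(Q,r,1)$-symmetric if there are $(Q,r)$-symmetric subsets $A,B$ with generator $\sigma$, $a\in A$, $b=\sigma^q(a)\in B$, $1\le q<r$; for $n\ge2$, $(Q,r,n)$-symmetric if not $(Q,r,j)$-symmetric for $j<n$ but there exist $c$, $j<n$ with $a$ $(Q,r,j)$-symmetric to $c$ and $c$ $(Q,r,n-j)$-symmetric to $b$; $(Q,r)$-symmetric if $(Q,r,n)$-symmetric for some $n\ge0$ (an equivalence relation). $P\oslash_rQ$ is the quotient poset of equivalence classes with $E\le F$ iff some $e\in E$, $f\in F$ satisfy $e\le f$. For a linked subset $A\cong Q$, the $(Q,r)$-symmetry group of $A$ is the largest subgroup of $\mathrm{Aut}(P)$ of $(Q,r)$-generators whose action fixes every $b\in P$ to which no $a\in A$ is $(Q,r)$-symmetric; the $(Q,r)$-symmetry set of $A$ is the set of elements not fixed by this group. The symmetry of a $(Q,r)$-symmetry set $S$ is composite if there exist a finite poset $\hat Q$, $\hat r\ge2$ and a $(\hat Q,\hat r)$-symmetry set $\hat S\subseteq S$ with either $\hat Q$ a proper subposet of $Q$, or $\hat Q=Q$ and $\hat r<r$; prime otherwise. $P\oslash'_rQ$ is the retraction using only prime $(Q,r)$-symmetries, and $[R\odot_rQ]'=\{P:P\oslash'_rQ\cong R,\ P\not\cong R\}$; for $r=2$ the index is dropped. *)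

From Stdlib Require Import Relations.
From mathcomp Require Import all_boot all_order all_fingroup.
Set Implicit Arguments. Unset Strict Implicit. Unset Printing Implicit Defensive.

Definition poset_ax (T : finType) (le : rel T) :=
  reflexive le /\ antisymmetric le /\ transitive le.

Definition iso_sub (T U : finType) (leT : rel T) (A : {set T})
    (leU : rel U) (B : {set U}) : Prop :=
  exists f : T -> U, {in A &, injective f} /\ [set f x | x in A] = B /\
    (forall x y, x \in A -> y \in A -> leU (f x) (f y) = leT x y).

(* (eqv-quotient of (T,le), with E <= F iff some e in E, f in F have e <= f)
   is isomorphic to (U, leU) *)
Definition quot_iso (T U : finType) (le : rel T) (eqv : T -> T -> Prop)
    (leU : rel U) : Prop :=
  exists f : T -> U, (forall u, exists x, f x = u) /\
    (forall x y, f x = f y <-> eqv x y) /\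
    (forall u v, leU u v <-> exists x y, [/\ f x = u, f y = v & le x y]).

Section Sym.
Variables (T : finType) (le : rel T).
Variables (U : finType) (leQ : rel U).

Definition lt (x y : T) := (x != y) && le x y.
Definition covers (a b : T) := lt a b && [forall c, ~~ (lt a c && lt c b)].

Definition isAut (s : {perm T}) := forall x y, le (s x) (s y) = le x y.
Definition Sigma (s : {perm T}) : {set T} := [set x | s x != x].

Definition chainb (C : {set T}) :=
  [forall x in C, forall y in C, le x y || le y x].
Definition ell (X : {set T}) : nat :=
  \max_(C : {set T} | (C \subset X) && chainb C) #|C|.

Definition nlt (A : {set T}) : nat :=
  #|[set p : T * T | [&& p.1 \in A, p.2 \in A & lt p.1 p.2]]|.
Definition max_ordered (A X : {set T}) : Prop :=
  A \subset X /\
  (forall B : {set T}, B \subset X -> #|B| = #|A| -> nlt B <= nlt A).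

Definition fam_ok (s : {perm T}) (r : nat) (S : nat -> {set T}) : Prop :=
  (forall i, i < r -> max_ordered (S i) (Sigma s) /\ ell (S i) = ell (Sigma s)) /\
  (forall i, i < r -> [set s x | x in S i] = S (i.+1 %% r)) /\
  (forall x, x \in Sigma s <-> exists2 i, i < r & x \in S i).

(* s is a (Q,r)-generator witnessed by the family S (Q = (U, leQ, B)) *)
Definition generator_fam (B : {set U}) (r : nat) (s : {perm T})
    (S : nat -> {set T}) : Prop :=
  [/\ 2 <= r, isAut s, fam_ok s r S,
      (forall i, i < r -> iso_sub le (S i) leQ B) &
      (forall S', fam_ok s r S' -> #|S 0| <= #|S' 0|)].

Definition generator (B : {set U}) (r : nat) (s : {perm T}) : Prop :=
  exists S, generator_fam B r s S.

Definition R1_by (ok : {perm T} -> Prop) (B : {set U}) (r : nat) (a b : T) : Prop :=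
  exists s S i j q, [/\ generator_fam B r s S, ok s, i < r, j < r & S i != S j] /\
    [/\ a \in S i, b = iter q s a, b \in S j, 1 <= q & q < r].

Definition symrel (B : {set U}) (r : nat) : T -> T -> Prop :=
  clos_refl_sym_trans T (R1_by (fun _ => True) B r).

Definition linked (A : {set T}) : Prop :=
  forall a b, a \in A -> b \in A -> lt a b ->
    covers a b \/ exists c, [/\ c \in A, lt a c & lt c b].

(* generators of the (Q,r)-symmetry group of A *)
Definition admissible (B : {set U}) (r : nat) (A : {set T}) (s : {perm T}) : Prop :=
  generator B r s /\
  (forall b, ~ (exists2 a, a \in A & symrel B r a b) -> s b = b).

Inductive in_gen (G : {perm T} -> Prop) : {perm T} -> Prop :=
| in_gen1 : in_gen G 1%g
| in_genM s t : G s -> in_gen G t -> in_gen G (s * t)%g.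

Definition symset (B : {set U}) (r : nat) (A : {set T}) (x : T) : Prop :=
  exists g, in_gen (admissible B r A) g /\ g x != x.

Definition is_symset (B : {set U}) (r : nat) (S : T -> Prop) : Prop :=
  exists A : {set T}, [/\ linked A, iso_sub le A leQ B &
    forall x, S x <-> symset B r A x].

Definition composite (B : {set U}) (r : nat) (S : T -> Prop) : Prop :=
  exists (B' : {set U}) (r' : nat) (S' : T -> Prop),
    [/\ 2 <= r', is_symset B' r' S', (exists x, S' x), (forall x, S' x -> S x) &
        (B' \proper B \/ (B' = B /\ r' < r))].

Definition prime_ok (B : {set U}) (r : nat) (s : {perm T}) : Prop :=
  exists A : {set T}, [/\ linked A, iso_sub le A leQ B, admissible B r A s &
    ~ composite B r (symset B r A)].

Definition symrel_prime (B : {set U}) (r : nat) : T -> T -> Prop :=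
  clos_refl_sym_trans T (R1_by (prime_ok B r) B r).

End Sym.

Definition leC2 : rel 'I_2 := fun x y => val x <= val y.
Definition leV : rel 'I_3 := fun x y => (x == y) || (val x == 0).
Definition S3_01 : {set {set 'I_4}} := [set X : {set 'I_4} | 0 < #|X| <= 2].
Definition leS : rel {set 'I_4} := fun X Y => X \subset Y.

Definition retract_prime_iso (T : finType) (le : rel T) (U : finType) (leQ : rel U)
    (r : nat) (R : finType) (leR : rel R) : Prop :=
  quot_iso le (symrel_prime le leQ [set: U] r) leR.

(* P ⊘' V ≅ C_2 forces the two symmetry classes to be the two levels of P, and every symmetry
   step is an automorphism, so P has height two and Aut P is transitive on each level.  The shape
   of a (V,2)-generator shows that it swaps two lower elements and fixes the other ones;
   conjugating such swaps, any two lower elements can be swapped by an automorphism fixing the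
   rest.  Two upper elements with the same lower elements would give a nonempty
   ({0},2)-symmetry set inside every V-symmetry set, contradicting primality, so upper elements
   are determined by their lower sets.  Comparing the two upper elements of one generator then
   leaves exactly four lower elements, each upper element lying above two of them and every pair
   occurring: P ≅ S_3|_{0,1}.
   Conversely, in S_3|_{0,1} each transposition (i j) of {1,2,3,4} swaps the vees
   {i, ik, il} and {j, jk, jl}; these generators connect each level, and they are prime: for a
   proper subposet Q of V, the sets of a nontrivial (Q,r)-generator are a vertex below an edge
   whose two orbits contain every moved vertex and every moved edge, which no nontrivial
   permutation of a 4-set allows. *)

From Stdlib Require Import Relations.
From mathcomp Require Import all_boot all_order all_fingroup.
From mathcomp Require Import zify.
Set Implicit Arguments. Unset Strict Implicit. Unset Printing Implicit Defensive.

Lemma clos_rst_minimal (A : Type) (R E : relation A) :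
  equivalence A E -> inclusion A R E -> inclusion A (clos_refl_sym_trans A R) E.
Proof.
move=> [Erefl Etrans Esym] RE x y; elim=> {x y} [x y /RE //|x|x y _|x y z _ Exy _].
- exact: Erefl.
- exact: Esym.
- exact: Etrans.
Qed.

Lemma clos_rst_mono (A : Type) (R R' : relation A) :
  inclusion A R R' -> inclusion A (clos_refl_sym_trans A R) (clos_refl_sym_trans A R').
Proof.
move=> RR'; apply: clos_rst_minimal; first exact: clos_rst_is_equiv.
by move=> x y Rxy; apply: rst_step; apply: RR'.
Qed.

Lemma clos_rst_first_step (A : Type) (R : relation A) a b :
  clos_refl_sym_trans A R a b -> a <> b -> exists c, R a c \/ R c a.
Proof. by move=> Rab; case: (@clos_rst_rst1n _ _ _ _ Rab) => [|c d Rac _] // _; exists c. Qed.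

Lemma set3P (T : finType) (x y z t : T) :
  reflect [\/ t = x, t = y | t = z] (t \in [set x; y; z]).
Proof.
rewrite !inE; apply: (iffP idP).
- by case/orP => [/orP[]|] /eqP ->; [apply: Or31 | apply: Or32 | apply: Or33].
- by case=> ->; rewrite eqxx ?orbT.
Qed.

Lemma cards3 (T : finType) (a b c : T) :
  a != b -> a != c -> b != c -> #|[set a; b; c]| = 3.
Proof.
move=> nab nac nbc; rewrite setUC cardsU1 cards2 nab !inE negb_or.
by rewrite eq_sym nac eq_sym nbc.
Qed.

Lemma mem_imset_tperm (T : finType) (a b t : T) (A : {set T}) :
  (t \in tperm a b @: A) = (tperm a b t \in A).
Proof. by rewrite -{1}(tpermK a b t) mem_imset //; apply: perm_inj. Qed.

Lemma tperm_imset_id (T : finType) (a b : T) (A : {set T}) :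
  a \in A -> b \in A -> tperm a b @: A = A.
Proof.
move=> aA bA; apply/setP => t; rewrite mem_imset_tperm.
by case: tpermP => [->|->|] //; rewrite aA bA.
Qed.

Section Poset.
Variables (T : finType) (le : rel T).
Hypothesis Hpo : poset_ax le.

Lemma le_refl x : le x x. Proof. by case: Hpo. Qed.

Lemma le_anti x y : le x y -> le y x -> x = y.
Proof. by case: Hpo => _ [anti _] lxy lyx; apply: anti; rewrite lxy lyx. Qed.

Lemma le_trans x y z : le x y -> le y z -> le x z.
Proof. by case: Hpo => _ [_ trans]; apply: trans. Qed.

Lemma ltW x y : lt le x y -> le x y. Proof. by case/andP. Qed.

Lemma lt_neq x y : lt le x y -> x != y. Proof. by case/andP. Qed.

Lemma lt_def x y : le x y -> x != y -> lt le x y.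
Proof. by move=> lxy nxy; rewrite /lt nxy lxy. Qed.

Lemma lt_irr x : ~~ lt le x x. Proof. by rewrite /lt eqxx. Qed.

Lemma lt_trans x y z : lt le x y -> lt le y z -> lt le x z.
Proof.
move=> /andP[nxy lxy] /andP[nyz lyz]; rewrite /lt (le_trans lxy lyz) andbT.
by apply: contra nxy => /eqP exz; rewrite exz in lxy *; rewrite (le_anti lyz lxy).
Qed.

Lemma lt_nle x y : lt le x y -> ~~ le y x.
Proof. by move=> /andP[nxy lxy]; apply: contra nxy => lyx; rewrite (le_anti lxy lyx). Qed.

Lemma isAut1 : isAut le 1%g. Proof. by move=> x y; rewrite !perm1. Qed.

Lemma isAutM s t : isAut le s -> isAut le t -> isAut le (s * t)%g.
Proof. by move=> hs ht x y; rewrite !permM ht hs. Qed.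

Lemma isAutV s : isAut le s -> isAut le s^-1%g.
Proof. by move=> hs x y; rewrite -[LHS]hs !permKV. Qed.

Lemma isAutX s n : isAut le s -> isAut le (s ^+ n)%g.
Proof.
move=> hs; elim: n => [|n IH]; first by rewrite expg0; apply: isAut1.
by rewrite expgS; apply: isAutM.
Qed.

Lemma aut_lt s x y : isAut le s -> lt le (s x) (s y) = lt le x y.
Proof. by move=> hs; rewrite /lt (inj_eq perm_inj) hs. Qed.

(* Otherwise x < s x < s^2 x < ... < s^#[s] x = x. *)
Lemma aut_image_nlt s x : isAut le s -> ~~ lt le x (s x).
Proof.
move=> hs; apply/negP => lt_x_sx.
have lt_iter n : lt le x ((s ^+ n.+1)%g x).
  elim: n => [|n IH]; first by rewrite expg1.
  apply: lt_trans IH _; rewrite [in X in lt le _ X]expgS permM aut_lt //; exact: isAutX.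
by move: (lt_iter #[s]%g.-1); rewrite prednK ?order_gt0 // expg_order perm1 (negbTE (lt_irr x)).
Qed.

Definition aut_related a b := exists2 g, isAut le g & g a = b.

Lemma aut_related_equiv : equivalence T aut_related.
Proof.
split.
- by move=> a; exists 1%g; [exact: isAut1 | rewrite perm1].
- by move=> a b c [g hg <-] [h hh <-]; exists (g * h)%g; [exact: isAutM | rewrite permM].
- by move=> a b [g hg <-]; exists g^-1%g; [exact: isAutV | rewrite permK].
Qed.

Lemma R1_aut_related (U : finType) (leQ : rel U) ok B r a b :
  R1_by le leQ ok B r a b -> aut_related a b.
Proof.
case=> s [S [i [j [q [[[_ hs _ _ _] _ _ _ _] [_ -> _ _ _]]]]]].
by exists (s ^+ q)%g; [exact: isAutX | rewrite permX].
Qed.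

Lemma R1_by_true (U : finType) (leQ : rel U) ok B r a b :
  R1_by le leQ ok B r a b -> R1_by le leQ (fun _ => True) B r a b.
Proof. by case=> s [S [i [j [q [[gen _ ir jr nS] mem]]]]]; exists s, S, i, j, q. Qed.

Lemma clos_R1_aut_related (U : finType) (leQ : rel U) ok B r a b :
  clos_refl_sym_trans T (R1_by le leQ ok B r) a b -> aut_related a b.
Proof.
by apply: clos_rst_minimal; [exact: aut_related_equiv | move=> x y /R1_aut_related].
Qed.


Lemma ell_ge (X C : {set T}) : C \subset X -> chainb le C -> #|C| <= ell le X.
Proof.
move=> sCX chC; rewrite /ell.
apply: (@leq_bigmax_cond _ (fun C : {set T} => (C \subset X) && chainb le C) (fun C => #|C|)).
by rewrite sCX chC.
Qed.

Lemma ell_ge1 (X : {set T}) x : x \in X -> 0 < ell le X.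
Proof.
move=> xX; rewrite -(cards1 x); apply: ell_ge; first by rewrite sub1set.
by apply/forall_inP => a /set1P ->; apply/forall_inP => b /set1P ->; rewrite le_refl.
Qed.

Lemma ell_ge2 (X : {set T}) p q : p \in X -> q \in X -> lt le p q -> 1 < ell le X.
Proof.
move=> pX qX ltpq; have <- : #|[set p; q]| = 2 by rewrite cards2 lt_neq.
apply: ell_ge; first by apply/subsetP => t /set2P[] ->.
apply/forall_inP => a /set2P[] ->; apply/forall_inP => b /set2P[] ->;
  by rewrite ?le_refl ?(ltW ltpq) ?orbT.
Qed.

Lemma ell_le1 (X : {set T}) :
  {in X &, forall p q, ~~ lt le p q} -> ell le X <= 1.
Proof.
move=> antiX; apply/bigmax_leqP => C /andP[sCX chC]; rewrite leqNgt.
apply/negP => /card_gt1P[x [y [xC yC nxy]]].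
have [xX yX] := (subsetP sCX x xC, subsetP sCX y yC).
have /orP[lxy|lyx] := forall_inP (forall_inP chC x xC) y yC.
- by move: (antiX x y xX yX); rewrite lt_def.
- by move: (antiX y x yX xX); rewrite lt_def // eq_sym.
Qed.

Lemma ell_gt1P (X : {set T}) :
  1 < ell le X -> exists p q, [/\ p \in X, q \in X & lt le p q].
Proof.
case: (boolP [exists p in X, exists q in X, lt le p q]).
  by case/exists_inP => p pX /exists_inP[q qX ltpq] _; exists p, q.
move=> /exists_inPn antiX; rewrite ltnNge ell_le1 // => p q pX qX.
exact: (exists_inPn (antiX p pX) q qX).
Qed.

Lemma nlt_card1 (B : {set T}) : #|B| = 1 -> nlt le B = 0.
Proof.
move/eqP/cards1P => [b ->]; apply/eqP; rewrite /nlt cards_eq0; apply/eqP/setP => -[p q].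
by rewrite !inE; apply/and3P => -[/eqP -> /eqP ->]; rewrite (negbTE (lt_irr b)).
Qed.

Lemma nlt_ge2 (B : {set T}) p q1 q2 : p \in B -> q1 \in B -> q2 \in B -> q1 != q2 ->
  lt le p q1 -> lt le p q2 -> 1 < nlt le B.
Proof.
move=> pB q1B q2B nq lt1 lt2; apply/card_gt1P; exists (p, q1), (p, q2).
by rewrite !inE /= pB q1B q2B lt1 lt2 xpair_eqE negb_and nq orbT.
Qed.

Definition Vshape x y z := [/\ lt le x y, lt le x z, y != z, ~~ le y z & ~~ le z y].

Definition vee0 : 'I_3 := @Ordinal 3 0 isT.
Definition vee1 : 'I_3 := @Ordinal 3 1 isT.
Definition vee2 : 'I_3 := @Ordinal 3 2 isT.

Lemma ord3P (i : 'I_3) : [\/ i = vee0, i = vee1 | i = vee2].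
Proof.
by case: i => -[|[|[|//]]] i3; [apply: Or31 | apply: Or32 | apply: Or33]; apply: val_inj.
Qed.

Lemma iso_vee x y z : Vshape x y z -> iso_sub le [set x; y; z] leV [set: 'I_3].
Proof.
move=> [lxy lxz nyz nlyz nlzy].
pose h t := if t == x then vee0 else if t == y then vee1 else vee2.
have hx : h x = vee0 by rewrite /h eqxx.
have hy : h y = vee1 by rewrite /h eq_sym (negbTE (lt_neq lxy)) eqxx.
have hz : h z = vee2 by rewrite /h eq_sym (negbTE (lt_neq lxz)) eq_sym (negbTE nyz).
exists h; split; last split.
- by move=> a b /set3P[] -> /set3P[] ->; rewrite ?hx ?hy ?hz.
- apply/setP => i; rewrite inE; apply/imsetP.
  by case: (ord3P i) => ->; [exists x | exists y | exists z]; rewrite ?hx ?hy ?hz ?inE ?eqxx ?orbT.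
- move=> a b /set3P[] -> /set3P[] ->; rewrite ?hx ?hy ?hz ?le_refl ?(ltW lxy) ?(ltW lxz) //=;
    by rewrite ?(negbTE (lt_nle lxy)) ?(negbTE (lt_nle lxz)) ?(negbTE nlyz) ?(negbTE nlzy).
Qed.

Lemma iso_vee_triple (A : {set T}) : iso_sub le A leV [set: 'I_3] ->
  exists x y z, [/\ A = [set x; y; z], lt le x y, lt le x z & y != z].
Proof.
move=> [h [hinj [himg hle]]].
have preim i : exists2 t, t \in A & i = h t by apply/imsetP; rewrite himg inE.
have [x xA hx] := preim vee0; have [y yA hy] := preim vee1; have [z zA hz] := preim vee2.
have h_neq a b : h a != h b -> a != b by apply: contraNneq => ->.
exists x, y, z; split.
- apply/setP => t; apply/idP/set3P => [tA|[] -> //].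
  by case: (ord3P (h t)) => ht; [apply: Or31 | apply: Or32 | apply: Or33];
    apply: hinj; rewrite ?ht -?hx -?hy -?hz.
- by rewrite /lt -hle // -hx -hy h_neq // -hx -hy.
- by rewrite /lt -hle // -hx -hz h_neq // -hx -hz.
- by rewrite h_neq // -hy -hz.
Qed.

Definition vee_set (A : {set T}) := exists x y z, A = [set x; y; z] /\ Vshape x y z.

Lemma iso_sub_setT (U : finType) (leU : rel U) (B : {set U}) (phi : T -> U) :
  reflexive leU -> (forall a b, leU (phi a) (phi b) = le a b) ->
  [set phi t | t in [set: T]] = B -> iso_sub le [set: T] leU B.
Proof.
move=> reflU phi_le phiT; exists phi; split; last by split => // a b _ _.
by move=> a b _ _ eab; apply: le_anti; rewrite -phi_le eab reflU.
Qed.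

Lemma vee_set_card (A : {set T}) : vee_set A -> #|A| = 3.
Proof.
by move=> [x [y [z [-> [lxy lxz nyz _ _]]]]]; rewrite (cards3 (lt_neq lxy) (lt_neq lxz) nyz).
Qed.

Lemma iso_sub_set1 (U : finType) (leU : rel U) (w : T) (i : U) :
  leU i i -> iso_sub le [set w] leU [set i].
Proof.
move=> leUii; exists (fun _ => i); split; first by move=> a b /set1P -> /set1P ->.
split; first by rewrite imset_set1.
by move=> a b /set1P -> /set1P ->; rewrite le_refl.
Qed.

End Poset.

Lemma Sigma_tperm (T : finType) (a b : T) : a != b -> Sigma (tperm a b) = [set a; b].
Proof.
move=> nab; apply/setP => t; rewrite !inE.
case: tpermP => [->|->|/eqP nta /eqP ntb]; first by rewrite eqxx eq_sym nab.
  by rewrite eqxx orbT nab.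
by rewrite eqxx (negbTE nta) (negbTE ntb).
Qed.

Lemma fam_ok_iter (T : finType) (le : rel T) s r S i :
  fam_ok le s r S -> i < r -> S i = [set iter i s t | t in S 0].
Proof.
move=> [_ [Him _]]; elim: i => [_|i IH lt_ir]; first by rewrite imset_id.
have := Him i (ltnW lt_ir); rewrite modn_small // => <-.
rewrite IH ?(ltnW lt_ir) // -imset_comp.
by apply: eq_imset.
Qed.

Lemma fam_ok_moved (T : finType) (le : rel T) s r S k t :
  fam_ok le s r S -> k < r -> t \in S k -> s t != t.
Proof.
move=> [_ [_ cov]] kr tS; suff : t \in Sigma s by rewrite inE.
by apply/cov; exists k.
Qed.

(** * Posets of height two *)

Section TwoLevel.
Variables (T : finType) (le : rel T).
Hypothesis Hpo : poset_ax le.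
Variable hi : pred T.
Hypothesis lt_lo_hi : forall p q, lt le p q -> ~~ hi p && hi q.

Lemma lo_le_eq p q : ~~ hi q -> le p q -> p = q.
Proof.
move=> loq lpq; apply/eqP/negPn/negP => npq.
by have /andP[_ hiq] := lt_lo_hi (lt_def lpq npq); rewrite hiq in loq.
Qed.

Lemma hi_le_eq p q : hi p -> le p q -> p = q.
Proof.
move=> hip lpq; apply/eqP/negPn/negP => npq.
by have /andP[lop _] := lt_lo_hi (lt_def lpq npq); rewrite hip in lop.
Qed.

Lemma ell_le2 (X : {set T}) : ell le X <= 2.
Proof.
apply/bigmax_leqP => C /andP[_ chC].
have hi_inj : {in C &, injective hi}.
  move=> a b aC bC eab; apply/eqP/negPn/negP => nab.
  have /orP[lab|lba] := forall_inP (forall_inP chC a aC) b bC.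
  - by have /andP[] := lt_lo_hi (lt_def lab nab); rewrite eab => /negP.
  - by have /andP[] := lt_lo_hi (lt_def lba (contra_neq esym nab)); rewrite eab => /negP.
by rewrite -(card_in_imset hi_inj) (leq_trans (max_card _)) // card_bool.
Qed.

Lemma ell_eq2 (X : {set T}) p q : p \in X -> q \in X -> lt le p q -> ell le X = 2.
Proof. by move=> pX qX ltpq; apply/eqP; rewrite eqn_leq ell_le2 (ell_ge2 Hpo pX qX ltpq). Qed.

(* Strict pairs of B go from its lower to its upper part, and a + b = 3 forces a * b <= 2. *)
Lemma nlt_le_card3 (B : {set T}) : #|B| = 3 -> nlt le B <= 2.
Proof.
move=> cardB; set H := [set t | hi t].
have : nlt le B <= #|B :\: H| * #|B :&: H|.
  rewrite /nlt -cardsX; apply: subset_leq_card; apply/subsetP => -[p q].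
  by rewrite !inE /= => /and3P[pB qB /lt_lo_hi/andP[lop hiq]]; rewrite pB qB lop hiq.
have := cardsID H B; rewrite cardB; nia.
Qed.

Lemma linked_two_level (A : {set T}) : linked le A.
Proof.
move=> a b _ _ ltab; left; rewrite /covers ltab; apply/forallP => c; apply/negP => /andP[].
by move=> /lt_lo_hi/andP[_ hic] /lt_lo_hi/andP[loc _]; rewrite hic in loc.
Qed.

Lemma vee_set_max_ordered (A X : {set T}) : vee_set le A -> A \subset X ->
  max_ordered le A X /\ ell le A = ell le X.
Proof.
move=> [x [y [z [-> [lxy lxz nyz _ _]]]]] sAX.
have [xA yA zA] : [/\ x \in [set x; y; z], y \in [set x; y; z] & z \in [set x; y; z]].
  by rewrite !inE !eqxx ?orbT.
split; last by rewrite (ell_eq2 xA yA lxy) (ell_eq2 (subsetP sAX _ xA) (subsetP sAX _ yA) lxy).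
split => // B _ cardB; apply: leq_trans (nlt_ge2 xA yA zA nyz lxy lxz).
by apply: nlt_le_card3; rewrite cardB (cards3 (lt_neq lxy) (lt_neq lxz) nyz).
Qed.

Lemma vee_generator_of_swap (g : {perm T}) (A0 A1 : {set T}) :
  isAut le g -> vee_set le A0 -> vee_set le A1 -> g @: A0 = A1 -> g @: A1 = A0 ->
  Sigma g = A0 :|: A1 -> [disjoint A0 & A1] ->
  generator_fam le leV [set: 'I_3] 2 g (fun n => if n == 0 then A0 else A1).
Proof.
move=> autg vA0 vA1 gA0 gA1 SigmaE disjA.
have famA : fam_ok le g 2 (fun n => if n == 0 then A0 else A1).
  split; last split.
  - move=> [|[|//]] _ /=; apply: vee_set_max_ordered => //;
      by rewrite SigmaE ?subsetUl ?subsetUr.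
  - by move=> [|[|//]] _.
  - move=> t; rewrite SigmaE inE; split; first by case/orP => tA; [exists 0 | exists 1].
    by case=> -[|[|//]] _ /= ->; rewrite ?orbT.
split => //.
- by move=> [|i] _ /=; [case: vA0 | case: vA1] => x [y [z [-> /iso_vee]]]; apply.
- move=> S' [_ [Him Hcov]] /=.
  have cardS'1 : #|S' 1| = #|S' 0| by rewrite -(Him 0 isT) card_imset //; apply: perm_inj.
  have : #|Sigma g| <= #|S' 0 :|: S' 1|.
    apply/subset_leq_card/subsetP => t /Hcov[[|[|//]] _ tS]; by rewrite inE tS ?orbT.
  rewrite SigmaE cardsU (disjoint_setI0 disjA) cards0 (vee_set_card vA0) (vee_set_card vA1).
  by move/leq_trans/(_ (leq_card_setU _ _)); rewrite cardS'1; lia.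
Qed.

Definition lower_set u := [set l | ~~ hi l & le l u].

Lemma tperm_twins_aut u1 u2 : hi u1 -> hi u2 -> lower_set u1 = lower_set u2 ->
  isAut le (tperm u1 u2).
Proof.
move=> hi1 hi2 twins a b.
have le_hi u c : hi u -> le u c = (u == c).
  by move=> hiu; apply/idP/eqP => [/(hi_le_eq hiu)|<-]; rewrite ?le_refl.
have le_other c : c != u1 -> c != u2 -> le c u1 = le c u2.
  move=> nc1 nc2; case hic: (hi c); first by rewrite !le_hi // (negbTE nc1) (negbTE nc2).
  by move/setP: twins => /(_ c); rewrite !inE hic.
case: (tpermP u1 u2 a) => [->|->|/eqP na1 /eqP na2];
case: (tpermP u1 u2 b) => [->|->|/eqP nb1 /eqP nb2];
  rewrite ?(le_hi u1) ?(le_hi u2) ?eqxx // ?(eq_sym u1) ?(eq_sym u2);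
  by rewrite ?(negbTE na1) ?(negbTE na2) ?(negbTE nb1) ?(negbTE nb2) ?le_other.
Qed.

Lemma twins_generator u1 u2 : hi u1 -> hi u2 -> u1 != u2 -> lower_set u1 = lower_set u2 ->
  generator_fam le leV [set vee0] 2 (tperm u1 u2)
    (fun i => if i == 0 then [set u1] else [set u2]).
Proof.
move=> hi1 hi2 n12 twins; have SigmaE := Sigma_tperm n12.
have ell_one (X : {set T}) w : w \in X -> X \subset [set u1; u2] -> ell le X = 1.
  move=> wX sX; apply/eqP; rewrite eqn_leq (ell_ge1 Hpo wX) andbT; apply: ell_le1 => p q pX _.
  apply/negP => /lt_lo_hi/andP[+ _].
  by have /set2P[->|->] := subsetP sX p pX; rewrite ?hi1 ?hi2.
have part w : w \in [set u1; u2] ->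
    max_ordered le [set w] [set u1; u2] /\ ell le [set w] = ell le [set u1; u2].
  move=> wU; split; first by split => [|B _]; rewrite ?sub1set // cards1 => /nlt_card1 ->.
  by rewrite (ell_one [set w] w) ?(ell_one [set u1; u2] w) ?set11 ?sub1set.
have famS : fam_ok le (tperm u1 u2) 2 (fun i => if i == 0 then [set u1] else [set u2]).
  split; last split.
  - move=> [|[|//]] _; rewrite SigmaE; apply: part; by rewrite !inE eqxx ?orbT.
  - by move=> [|[|//]] _ /=; rewrite imset_set1 ?tpermL ?tpermR.
  - move=> t; rewrite SigmaE; split; first by case/set2P => ->; [exists 0 | exists 1]; rewrite ?inE.
    by case=> -[|[|//]] _ /= /set1P ->; rewrite !inE eqxx ?orbT.
split => //.
- exact: tperm_twins_aut.
- by move=> i _; case: (i == 0); apply: iso_sub_set1.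
- move=> S' [_ [Him Hcov]] /=; rewrite cards1 card_gt0; apply/set0Pn.
  have : u1 \in Sigma (tperm u1 u2) by rewrite SigmaE !inE eqxx.
  case/Hcov => -[|[|//]] _ u1S; first by exists u1.
  by move: u1S; rewrite -(Him 0 isT) => /imsetP[t tS _]; exists t.
Qed.

Lemma twins_symset u1 u2 : hi u1 -> hi u2 -> u1 != u2 -> lower_set u1 = lower_set u2 ->
  is_symset le leV [set vee0] 2 (symset le leV [set vee0] 2 [set u1]) /\
  symset le leV [set vee0] 2 [set u1] u1.
Proof.
move=> hi1 hi2 n12 twins; have gen := twins_generator hi1 hi2 n12 twins.
split; first by exists [set u1]; split => //; [apply: linked_two_level | apply: iso_sub_set1].
exists (tperm u1 u2 * 1)%g; split; last by rewrite mulg1 tpermL eq_sym.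
apply: in_genM (in_gen1 _); split; first by exists (fun i => if i == 0 then [set u1] else [set u2]).
move=> b nsym; case: tpermP => [ebu1|ebu2|//]; case: nsym; exists u1; rewrite ?inE //.
- by rewrite ebu1; apply: rst_refl.
apply: rst_step; exists (tperm u1 u2), (fun i => if i == 0 then [set u1] else [set u2]), 0, 1, 1.
split; split => //=; rewrite ?inE ?ebu2 ?tpermL //.
by apply/eqP => /setP/(_ u1); rewrite !inE eqxx (negbTE n12).
Qed.

Lemma iso_S3_01_of_lower_sets (x : 'I_4 -> T) :
  injective x -> (forall l, ~~ hi l <-> exists i, l = x i) ->
  {in hi &, injective lower_set} -> (forall u, hi u -> #|lower_set u| = 2) ->
  (forall i j, i != j -> exists2 u, hi u & lower_set u = [set x i; x j]) ->
  iso_sub le [set: T] leS S3_01.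
Proof.
move=> xinj lowsE twin_free card_lower pairs.
pose phi t := [set i | le (x i) t].
have lox i : ~~ hi (x i) by apply/lowsE; exists i.
have phi_lo i : phi (x i) = [set i].
  apply/setP => j; rewrite !inE.
  by apply/idP/eqP => [/(lo_le_eq (lox i))/xinj|->]; rewrite ?le_refl.
have phi_hi u : hi u -> x @: phi u = lower_set u.
  move=> hiu; apply/setP => l; rewrite inE; apply/imsetP/andP => [[i]|[lol lelu]].
    by rewrite inE => lexu ->; rewrite lox.
  by have [i eli] := (lowsE l).1 lol; exists i; rewrite // inE -eli.
have card_phi u : hi u -> #|phi u| = 2.
  by move=> hiu; rewrite -(card_imset _ xinj) phi_hi // card_lower.
have phi_le a b : (phi a \subset phi b) = le a b.
  case: (boolP (hi a)) => [hia|loa]; last first.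
    by have [i ->] := (lowsE a).1 loa; rewrite phi_lo sub1set inE.
  apply/idP/idP => [sub|leab]; last by rewrite -(hi_le_eq hia leab).
  have hib : hi b.
    apply: contraT => lob; have [j ebj] := (lowsE b).1 lob.
    by move: (subset_leq_card sub); rewrite ebj phi_lo cards1 card_phi.
  have ephi : phi a = phi b by apply/eqP; rewrite eqEcard sub !card_phi.
  by rewrite (twin_free a b) ?le_refl // -!phi_hi ?ephi.
apply: (iso_sub_setT Hpo (phi := phi)) => //; first by move=> X; apply: subxx.
apply/setP => X; rewrite inE; apply/imsetP/idP => [[t _ ->]|/andP[X0 X2]].
  case: (boolP (hi t)) => [/card_phi -> //|/lowsE[i ->]].
  by rewrite phi_lo cards1.
have [/eqP/cards1P[i ->]|/eqP/cards2P[i [j [nij ->]]]] : #|X| = 1 \/ #|X| = 2.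
  by move: X0 X2; case: #|X| => [|[|[|n]]] // _ _; [left | right].
  by exists (x i); rewrite ?phi_lo.
have [u hiu lowu] := pairs i j nij; exists u => //.
by apply/esym/(imset_inj xinj); rewrite phi_hi // lowu imsetU1 imset_set1.
Qed.

Hypothesis hi_has_lower : forall t, hi t -> exists l, lt le l t.

Lemma aut_hi g t : isAut le g -> hi (g t) = hi t.
Proof.
move=> autg; apply/idP/idP => [hig|hit].
- have [l] := hi_has_lower hig; rewrite -[l](permKV g) aut_lt //.
  by case/lt_lo_hi/andP.
- have [l ltlt] := hi_has_lower hit.
  by have /lt_lo_hi/andP[] : lt le (g l) (g t) by rewrite aut_lt.
Qed.

Lemma lower_set_aut g u : isAut le g -> lower_set (g u) = g @: lower_set u.
Proof.
move=> autg; apply/setP => l; rewrite -[l](permKV g) mem_imset; last exact: perm_inj.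
by rewrite !inE aut_hi // autg.
Qed.

Lemma vee_generator_shape s S : generator_fam le leV [set: 'I_3] 2 s S ->
  exists x y z, [/\ lt le x y, lt le x z & y != z] /\
    [/\ s x != x, s y != y, s z != z,
        forall l, ~~ hi l -> s l = tperm x (s x) l &
        forall u, hi u -> s u != u -> u \in [:: y; z; s y; s z]].
Proof.
case=> _ auts famS /(_ 0 isT) /iso_vee_triple[x [y [z [S0E ltxy ltxz nyz]]]] _.
have [_ [Him Hcov]] := famS.
have moved t : t \in [set x; y; z] -> s t != t by rewrite -S0E; apply: fam_ok_moved famS _.
have in01 t : s t != t ->
    t \in [set x; y; z] \/ exists2 t', t' \in [set x; y; z] & t = s t'.
  move=> mt; have : t \in Sigma s by rewrite inE.
  case/Hcov => -[|[|//]] _; rewrite -?S0E; first by left.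
  by rewrite -(Him 0 isT) S0E => /imsetP; right.
have [lox hiy hiz] : [/\ ~~ hi x, hi y & hi z].
  by have /andP[-> ->] := lt_lo_hi ltxy; have /andP[_ ->] := lt_lo_hi ltxz.
have lo_vee t : t \in [set x; y; z] -> ~~ hi t -> t = x.
  by case/set3P => -> //; rewrite ?hiy ?hiz.
have ssx : s (s x) = x.
  apply: lo_vee; last by rewrite !aut_hi.
  have S0E' : s @: S 1 = S 0 := Him 1 isT.
  rewrite -S0E -S0E' -(Him 0 isT); do 2 apply: imset_f.
  by rewrite S0E !inE eqxx.
exists x, y, z; split => //; split; try by apply: moved; rewrite !inE eqxx ?orbT.
- move=> l lol; case: (eqVneq l x) => [->|nlx]; first by rewrite tpermL.
  case: (eqVneq l (s x)) => [->|nlsx]; first by rewrite tpermR ssx.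
  have -> : tperm x (s x) l = l by apply: tpermD; rewrite eq_sym.
  apply/eqP/negPn/negP => /in01[/lo_vee/(_ lol) elx|[t tV elt]].
  + by rewrite elx eqxx in nlx.
  + by move: lol; rewrite elt aut_hi // => /(lo_vee _ tV) etx; rewrite elt etx eqxx in nlsx.
- move=> u hiu /in01[|[t tV eut]].
  + by case/set3P => eux; rewrite eux ?inE ?eqxx ?orbT //; rewrite -eux hiu in lox.
  + move: hiu; rewrite eut aut_hi //; case/set3P: tV => -> hit; rewrite ?inE ?eqxx ?orbT //.
    by rewrite hit in lox.
Qed.


End TwoLevel.

(** * From the retraction to S_3|_{0,1} *)

Section Forward.
Variables (T : finType) (le : rel T).
Hypothesis Hpo : poset_ax le.
Variable f : T -> 'I_2.
Hypothesis f_surj : forall u, exists x, f x = u.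
Hypothesis f_eq : forall x y, f x = f y <-> symrel_prime le leV [set: 'I_3] 2 x y.
Hypothesis f_le : forall u v, leC2 u v <-> exists x y, [/\ f x = u, f y = v & le x y].
Hypothesis not_C2 : ~ iso_sub le [set: T] leC2 [set: 'I_2].

Local Notation R1P := (R1_by le leV (prime_ok le leV [set: 'I_3] 2) [set: 'I_3] 2).

Definition upper t := f t == ord_max.

Lemma f_eq_aut x y : f x = f y -> aut_related le x y.
Proof. by move/f_eq/clos_R1_aut_related. Qed.

Lemma f_eq_level a b : upper a = upper b -> f a = f b.
Proof.
move=> e; apply/val_inj; move: e; rewrite /upper.
by case: (f a) => -[|[|//]] ?; case: (f b) => -[|[|//]] ?.
Qed.

Lemma lt_upper p q : lt le p q -> ~~ upper p && upper q.
Proof.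
move=> ltpq; have nf : f p != f q.
  by apply/eqP => /f_eq_aut[g autg epq]; move: (aut_image_nlt Hpo p autg); rewrite epq ltpq.
have : leC2 (f p) (f q) by apply/f_le; exists p, q; rewrite (ltW ltpq).
rewrite /upper /leC2; move: nf.
by case: (f p) => -[|[|//]] ?; case: (f q) => -[|[|//]] ?.
Qed.

Lemma upper_has_lower t : upper t -> exists l, lt le l t.
Proof.
move=> upt; have [p [q [fp fq lepq]]] : exists p q, [/\ f p = ord0, f q = ord_max & le p q].
  by apply/f_le.
have [g autg <-] : aut_related le q t by apply: f_eq_aut; rewrite fq; apply/esym/eqP.
exists (g p); rewrite aut_lt // lt_def //.
by apply/eqP => epq; move: fq; rewrite -epq fp => /(congr1 val).
Qed.

Lemma aut_upper g t : isAut le g -> upper (g t) = upper t.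
Proof. exact: (aut_hi lt_upper upper_has_lower). Qed.

Local Notation D := (lower_set le upper).

Lemma lower_set_autE g u : isAut le g -> D (g u) = g @: D u.
Proof. exact: (lower_set_aut lt_upper upper_has_lower). Qed.

Lemma lower_set_lo l u : l \in D u -> ~~ upper l.
Proof. by rewrite inE => /andP[]. Qed.

Definition prime_gen s S :=
  generator_fam le leV [set: 'I_3] 2 s S /\ prime_ok le leV [set: 'I_3] 2 s.

Lemma R1P_prime_gen a b : R1P a b -> exists s S, [/\ prime_gen s S, s a != a & s b != b].
Proof.
case=> s [S [i [j [q [[gen ok ir jr _] [aS -> bS _ _]]]]]].
have [_ _ famS _ _] := gen.
by exists s, S; split => //; [apply: fam_ok_moved famS ir aS | apply: fam_ok_moved famS jr bS].
Qed.

Lemma f_not_injective : exists a b, a != b /\ f a = f b.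
Proof.
case: (boolP [exists a, exists b, (a != b) && (f a == f b)]).
  by case/existsP => a /existsP[b /andP[nab /eqP fab]]; exists a, b.
move/existsPn => finj; case: not_C2.
have f_inj : injective f.
  move=> a b fab; apply/eqP/negPn/negP => nab.
  by move: (existsPn (finj a) b); rewrite nab fab eqxx.
apply: (iso_sub_setT Hpo (phi := f)) => [u|a b|]; first by rewrite /leC2.
  by apply/idP/idP => [/f_le[a' [b' [/f_inj-> /f_inj->]]]|leab] //; apply/f_le; exists a, b.
by apply/setP => u; rewrite inE; have [t <-] := f_surj u; apply: imset_f; rewrite inE.
Qed.

Lemma exists_prime_gen : exists s S, prime_gen s S.
Proof.
have [a [b [nab /f_eq sym_ab]]] := f_not_injective.
have [c [Rac|Rca]] := clos_rst_first_step sym_ab (elimN eqP nab).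
- by have [s [S [? _ _]]] := R1P_prime_gen Rac; exists s, S.
- by have [s [S [? _ _]]] := R1P_prime_gen Rca; exists s, S.
Qed.

(* Every level has two elements, and the first symmetry step out of w moves w. *)
Lemma prime_gen_moves w : exists s S, prime_gen s S /\ s w != w.
Proof.
have [s0 [S0 [gen0 _]]] := exists_prime_gen; have [_ aut0 _ _ _] := gen0.
have [x [y [z [[ltxy ltxz nyz] [mx _ _ _ _]]]]] :=
  vee_generator_shape lt_upper upper_has_lower gen0.
have /andP[lox upy] := lt_upper ltxy; have /andP[_ upz] := lt_upper ltxz.
have [w' [nww' fww']] : exists w', w != w' /\ f w = f w'.
  case: (boolP (upper w)) => [upw|low].
  - case: (eqVneq w y) => [->|nwy]; [exists z | exists y];
      by split => //; apply: f_eq_level; rewrite ?upw ?upy ?upz.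
  - have f_lo v : ~~ upper v -> f w = f v.
      by move=> lov; apply: f_eq_level; rewrite (negbTE lov) (negbTE low).
    case: (eqVneq w x) => [exw|nwx]; last by exists x; rewrite (f_lo x).
    by exists (s0 x); rewrite (f_lo (s0 x)) ?aut_upper // exw eq_sym mx.
have [c [Rwc|Rcw]] := clos_rst_first_step ((f_eq _ _).1 fww') (elimN eqP nww').
- by have [s [S [? ? _]]] := R1P_prime_gen Rwc; exists s, S.
- by have [s [S [? _ ?]]] := R1P_prime_gen Rcw; exists s, S.
Qed.

Lemma symset_full A w : iso_sub le A leV [set: 'I_3] -> symset le leV [set: 'I_3] 2 A w.
Proof.
move=> /iso_vee_triple[p [q [r [-> /lt_upper/andP[lop upq] _ _]]]].
have [s [S [[gen _] mw]]] := prime_gen_moves w.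
exists (s * 1)%g; split; last by rewrite mulg1.
apply: in_genM (in_gen1 _); split; first by exists S.
move=> b []; case: (boolP (upper b)) => [upb|lob]; [exists q | exists p];
  rewrite ?inE ?eqxx ?orbT //;
  apply: (clos_rst_mono (@R1_by_true _ _ _ _ _ _ _)); apply/f_eq/f_eq_level;
  by rewrite ?upb ?upq ?(negbTE lob) ?(negbTE lop).
Qed.

(* Twins would yield a nonempty ([set vee0], 2)-symmetry set, making every symmetry composite. *)
Lemma upper_lower_set_inj : {in upper &, injective D}.
Proof.
move=> u1 u2 up1 up2 twins; apply/eqP/negPn/negP => n12.
have [s [S [_ [A [_ isoA _ prime]]]]] := exists_prime_gen.
have [symS' [g [gen gu1]]] := twins_symset Hpo lt_upper up1 up2 n12 twins.
apply: prime; exists [set vee0], 2, (symset le leV [set vee0] 2 [set u1]); split => //.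
- by exists u1, g.
- by move=> t _; apply: symset_full.
- by left; rewrite properT; apply/negP => /eqP/setP/(_ vee1); rewrite !inE.
Qed.

Definition low_swap a c :=
  exists2 g, isAut le g & forall l, ~~ upper l -> g l = tperm a c l.

Lemma low_swap_refl a : low_swap a a.
Proof. by exists 1%g => [|l _]; [apply: isAut1 | rewrite tperm1 !perm1]. Qed.

Lemma low_swap_sym a c : low_swap a c -> low_swap c a.
Proof. by case=> g autg eg; exists g => // l lol; rewrite tpermC eg. Qed.

(* Conjugating the swap of a and b by the swap of b and c swaps a and c. *)
Lemma low_swap_trans a b c : low_swap a b -> low_swap b c -> low_swap a c.
Proof.
move=> [g1 aut1 e1] [g2 aut2 e2].
case: (eqVneq a b) => [->|nab]; first by exists g2.
case: (eqVneq b c) => [<-|nbc]; first by exists g1.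
case: (eqVneq a c) => [<-|nac]; first exact: low_swap_refl.
exists (g2 * g1 * g2)%g => [|l lol]; first exact: isAutM (isAutM aut2 aut1) aut2.
have conj : tperm a c = (tperm a b ^ tperm b c)%g by rewrite tpermJ tpermL tpermD // eq_sym.
rewrite !permM e2 ?aut_upper // e1 ?aut_upper // e2 //.
by rewrite conj -[in RHS](tpermK b c l) permJ.
Qed.

Lemma R1_low_swap ok a b :
  R1_by le leV ok [set: 'I_3] 2 a b -> ~~ upper a -> low_swap a b.
Proof.
case=> s [S [i [j [q [[gen _ ir _ _] [aS -> _ q1 q2]]]]]] loa.
have -> /= : q = 1 by lia.
have [_ auts famS _ _] := gen.
have [x [y [z [[ltxy _ _] [_ _ _ s_lows _]]]]] :=
  vee_generator_shape lt_upper upper_has_lower gen.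
have lox : ~~ upper x by case/andP: (lt_upper ltxy).
have ma : s a != a := fam_ok_moved famS ir aS.
have ssx : s (s x) = x by rewrite s_lows ?tpermR // aut_upper.
exists s => // l lol; rewrite s_lows //.
have [->|->] : a = x \/ a = s x.
  by move: ma; rewrite s_lows //; case: tpermP => [->|->|_ _]; rewrite ?eqxx //; [left | right].
- by [].
- by rewrite ssx tpermC.
Qed.

Lemma low_swapP a c : ~~ upper a -> ~~ upper c -> low_swap a c.
Proof.
move=> loa loc.
have E_equiv : equivalence T (fun a c => upper a = upper c /\ (~~ upper a -> low_swap a c)).
  split.
  - by move=> b; split => // _; apply: low_swap_refl.
  - move=> b1 b2 b3 [e12 s12] [e23 s23]; split; first by rewrite e12.
    by move=> lo1; apply: low_swap_trans (s12 lo1) (s23 _); rewrite -e12.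
  - by move=> b1 b2 [e12 s12]; split => // lo2; apply/low_swap_sym/s12; rewrite e12.
have [] := clos_rst_minimal E_equiv _ ((f_eq a c).1 _); last by move=> _; apply.
- move=> b1 b2 R12; split; last exact: R1_low_swap R12.
  by have [g autg <-] := R1_aut_related R12; rewrite aut_upper.
- by apply: f_eq_level; rewrite (negbTE loa) (negbTE loc).
Qed.

Lemma lower_set_tperm u a c : upper u -> ~~ upper a -> ~~ upper c ->
  exists2 u', upper u' & D u' = tperm a c @: D u.
Proof.
move=> upu loa loc; have [g autg eg] := low_swapP loa loc.
exists (g u); first by rewrite aut_upper.
by rewrite lower_set_autE //; apply: eq_in_imset => l /lower_set_lo; apply: eg.
Qed.

Lemma lower_set_pairs u0 p0 q0 : upper u0 -> D u0 = [set p0; q0] -> p0 != q0 ->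
  forall p q, ~~ upper p -> ~~ upper q -> p != q -> exists2 u, upper u & D u = [set p; q].
Proof.
move=> up0 Du0 npq0 p q lop loq npq.
have lop0 : ~~ upper p0 by apply: (@lower_set_lo _ u0); rewrite Du0 !inE eqxx.
set q1 := tperm p0 p q0.
have [u1 up1 Du1] := lower_set_tperm up0 lop0 lop.
rewrite Du0 imsetU1 imset_set1 tpermL -/q1 in Du1.
have npq1 : p != q1 by rewrite -[p in p != _](tpermL p0 p) (inj_eq perm_inj).
have loq1 : ~~ upper q1 by apply: (@lower_set_lo _ u1); rewrite Du1 !inE eqxx orbT.
have [u2 up2 Du2] := lower_set_tperm up1 loq1 loq.
by exists u2; rewrite // Du2 Du1 imsetU1 imset_set1 tpermL tpermD // eq_sym.
Qed.

Section PrimeVee.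
Variables (s : {perm T}) (x y z : T).
Hypotheses (s_aut : isAut le s) (lt_xy : lt le x y) (lt_xz : lt le x z) (neq_yz : y != z).
Hypotheses (moved_x : s x != x) (moved_y : s y != y) (moved_z : s z != z).
Hypothesis s_lows : forall l, ~~ upper l -> s l = tperm x (s x) l.
Hypothesis s_uppers : forall u, upper u -> s u != u -> u \in [:: y; z; s y; s z].

Lemma lo_x : ~~ upper x. Proof. by case/andP: (lt_upper lt_xy). Qed.

Lemma up_y : upper y. Proof. by case/andP: (lt_upper lt_xy). Qed.

Lemma up_z : upper z. Proof. by case/andP: (lt_upper lt_xz). Qed.

Lemma x_in_lower_set u : lt le x u -> x \in D u.
Proof. by move=> ltxu; rewrite inE lo_x (ltW ltxu). Qed.

Lemma s_sx : s (s x) = x.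
Proof. by rewrite s_lows ?tpermR // aut_upper // lo_x. Qed.

Lemma lower_set_moved u : upper u -> s u != u -> x \in D u -> s x \notin D u.
Proof.
move=> upu mu xD; apply: contra mu => sxD.
have ups : upper (s u) by rewrite aut_upper.
apply/eqP/(upper_lower_set_inj ups upu).
rewrite lower_set_autE // -[RHS](tperm_imset_id xD sxD).
by apply: eq_in_imset => l /lower_set_lo; apply: s_lows.
Qed.

Lemma upper_sep u : upper u -> x \in D u -> s x \notin D u -> u = y \/ u = z.
Proof.
move=> upu xD sxD.
have mu : s u != u by apply: contraNneq sxD => <-; rewrite lower_set_autE // imset_f.
have sx_below v : x \in D (s v) -> s x \in D v.
  rewrite lower_set_autE // => /imsetP[t tD ext].
  by have -> : s x = t by apply: (@perm_inj _ s); rewrite s_sx.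
have [xDy xDz] := (x_in_lower_set lt_xy, x_in_lower_set lt_xz).
move: (s_uppers upu mu); rewrite !inE => /or4P[] /eqP eu; [by left | by right | |];
  rewrite eu in xD; have := sx_below _ xD.
- by rewrite (negbTE (lower_set_moved up_y moved_y xDy)).
- by rewrite (negbTE (lower_set_moved up_z moved_z xDz)).
Qed.

Lemma lower_set_diff : exists a b, [/\ a \in D y, a \notin D z, b \in D z & b \notin D y].
Proof.
have [g autg gyz] : aut_related le y z by apply/f_eq_aut/f_eq_level; rewrite up_y up_z.
have card_yz : #|D z| = #|D y|.
  by rewrite -gyz lower_set_autE // card_imset //; apply: perm_inj.
have nD : D y != D z.
  by apply: contra neq_yz => /eqP /(upper_lower_set_inj up_y up_z) ->.
have [a aDy aDz] : exists2 a, a \in D y & a \notin D z.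
  by apply/subsetPn; apply: contra nD => sub; rewrite eqEcard sub card_yz leqnn.
have [b bDz bDy] : exists2 b, b \in D z & b \notin D y.
  by apply/subsetPn; apply: contra nD => sub; rewrite eq_sym eqEcard sub card_yz leqnn.
by exists a, b.
Qed.

(* For l in D v outside {x, a}, swapping l and b in D v yields the lower set of an upper element
   above x but not above s x, which is neither v nor w. *)
Lemma lower_set_sub_pair v w a b : (v = y /\ w = z) \/ (v = z /\ w = y) ->
  a \in D v -> a \notin D w -> b \in D w -> b \notin D v -> D v \subset [set x; a].
Proof.
move=> vw aDv aDw bDw bDv.
have [upv xDv sxDv sxDw sep] : [/\ upper v, x \in D v, s x \notin D v, s x \notin D w &
    forall u, upper u -> x \in D u -> s x \notin D u -> u = v \/ u = w].
  have sxDy := lower_set_moved up_y moved_y (x_in_lower_set lt_xy).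
  have sxDz := lower_set_moved up_z moved_z (x_in_lower_set lt_xz).
  case: vw => -[-> ->]; split; rewrite ?up_y ?up_z ?x_in_lower_set // => u upu xDu sxDu;
    case: (upper_sep upu xDu sxDu) => ->; first [by left | by right].
apply/subsetP => l lDv; rewrite !inE; apply: contraT; rewrite negb_or => /andP[nlx nla].
have [u2 up2 Du2] := lower_set_tperm upv (lower_set_lo lDv) (lower_set_lo bDw).
have fix_t t : t != l -> t != b -> tperm l b t = t by move=> ntl ntb; apply: tpermD; rewrite eq_sym.
have nxb : x != b by apply: contraNneq bDv => <-.
have xD2 : x \in D u2 by rewrite Du2 mem_imset_tperm fix_t // eq_sym.
have sxD2 : s x \notin D u2.
  rewrite Du2 mem_imset_tperm fix_t //; first by apply: contraNneq sxDv => ->.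
  by apply: contraNneq sxDw => ->.
have [eu2|eu2] := sep u2 up2 xD2 sxD2.
- by move: bDv; rewrite -eu2 Du2 mem_imset_tperm tpermR lDv.
- have nab : a != b by apply: contraNneq bDv => <-.
  have nal : a != l by rewrite eq_sym.
  by move: aDw; rewrite -eu2 Du2 mem_imset_tperm fix_t // aDv.
Qed.

Lemma lower_set_cover a l : D y = [set x; a] -> x != a -> ~~ upper l -> l != s x ->
  l \in D y \/ l \in D z.
Proof.
move=> Dy nxa lol nlsx; case: (eqVneq l x) => [->|nlx].
  by left; apply: x_in_lower_set.
have loa : ~~ upper a by apply: (@lower_set_lo _ y); rewrite Dy !inE eqxx orbT.
have [u3 up3 Du3] := lower_set_tperm up_y loa lol.
rewrite Dy imsetU1 imset_set1 tpermL tpermD // 1?eq_sym // in Du3.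
have xD3 : x \in D u3 by rewrite Du3 !inE eqxx.
have sxD3 : s x \notin D u3 by rewrite Du3 !inE negb_or moved_x eq_sym.
by case: (upper_sep up3 xD3 sxD3) => eu3; [left | right]; rewrite -eu3 Du3 !inE eqxx orbT.
Qed.

Lemma prime_vee_structure : exists a b, [/\ uniq [:: x; s x; a; b],
  forall l, ~~ upper l <-> l \in [:: x; s x; a; b] & D y = [set x; a]].
Proof.
have [a [b [aDy aDz bDz bDy]]] := lower_set_diff.
have [xDy xDz] := (x_in_lower_set lt_xy, x_in_lower_set lt_xz).
have sxDy := lower_set_moved up_y moved_y xDy.
have sxDz := lower_set_moved up_z moved_z xDz.
have pair_eq v c : D v \subset [set x; c] -> x \in D v -> c \in D v -> D v = [set x; c].
  by move=> sub xD cD; apply/eqP; rewrite eqEsubset sub; apply/subsetP => t /set2P[] ->.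
have Dy : D y = [set x; a].
  exact: pair_eq (lower_set_sub_pair (or_introl (conj erefl erefl)) aDy aDz bDz bDy) xDy aDy.
have Dz : D z = [set x; b].
  exact: pair_eq (lower_set_sub_pair (or_intror (conj erefl erefl)) bDz bDy aDy aDz) xDz bDz.
have nxa : x != a by apply: contraNneq aDz => <-.
exists a, b; split => //.
- rewrite /= !inE !negb_or eq_sym moved_x nxa.
  have [-> ->] : x != b /\ s x != a.
    by split; [apply: contraNneq bDy => <- | apply: contraNneq sxDy => ->].
  have [-> ->] // : s x != b /\ a != b.
  by split; [apply: contraNneq sxDz => -> | apply: contraNneq bDy => <-].
- move=> l; split => [lol|].
    case: (eqVneq l (s x)) => [->|nlsx]; first by rewrite !inE eqxx orbT.
    by case: (lower_set_cover Dy nxa lol nlsx); rewrite ?Dy ?Dz !inE => /orP[] ->; rewrite ?orbT.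
  rewrite !inE => /or4P[] /eqP ->; rewrite ?aut_upper ?lo_x //.
  - exact: lower_set_lo aDy.
  - exact: lower_set_lo bDz.
Qed.

End PrimeVee.

Lemma forward_iso : iso_sub le [set: T] leS S3_01.
Proof.
have [s [S [gen _]]] := exists_prime_gen; have [_ auts _ _ _] := gen.
have [x [y [z [[ltxy ltxz nyz] [mx my mz s_lows s_uppers]]]]] :=
  vee_generator_shape lt_upper upper_has_lower gen.
have [a [b [uniq4 lowsE Dy]]] :=
  prime_vee_structure auts ltxy ltxz nyz mx my mz s_lows s_uppers.
have upy := up_y ltxy.
have nxa : x != a by move: uniq4; rewrite /= !inE !negb_or => /and4P[/and3P[]].
pose t4 := [tuple x; s x; a; b].
have t4_inj : injective (tnth t4) by apply/tuple_uniqP.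
apply: (iso_S3_01_of_lower_sets Hpo lt_upper (x := tnth t4)) => //.
- by move=> l; rewrite lowsE; apply: (iff_sym (rwP (tnthP _ _))).
- exact: upper_lower_set_inj.
- move=> u upu; have [g autg <-] : aut_related le y u by apply/f_eq_aut/f_eq_level; rewrite upy.
  by rewrite lower_set_autE // card_imset ?Dy ?cards2 ?nxa //; apply: perm_inj.
- move=> i j nij; apply: (lower_set_pairs upy Dy nxa); rewrite ?(inj_eq t4_inj) //;
    by apply/lowsE/tnthP; eexists.
Qed.

End Forward.

(** * Symmetries of S_3|_{0,1} *)

Lemma imset_perm_subset (U : finType) (pi : {perm U}) (A B : {set U}) :
  (pi @: A \subset pi @: B) = (A \subset B).
Proof.
apply/idP/idP => [sAB|]; last exact: imsetS.
apply/subsetP => x xA; have := subsetP sAB (pi x) (imset_f _ xA).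
by rewrite (mem_imset _ _ perm_inj).
Qed.

Lemma imset_tperm_eq (U : finType) (i j : U) (X : {set U}) :
  (tperm i j @: X == X) = ((i \in X) == (j \in X)).
Proof.
apply/eqP/eqP => [/setP eX|eij]; last first.
  by apply/setP => t; rewrite mem_imset_tperm; case: tpermP => [->|->|] //; rewrite eij.
by apply/idP/idP => inX; [move: (eX i) | move: (eX j)];
  rewrite mem_imset_tperm ?tpermL ?tpermR inX.
Qed.

Lemma ord4_other (i j k : 'I_4) : exists m, m \notin [:: i; j; k].
Proof.
apply/existsP; rewrite -negb_forall; apply/negP => /forallP allm.
have : #|'I_4| <= #|[:: i; j; k]| by apply/subset_leq_card/subsetP => m _; apply: allm.
by rewrite card_ord => /leq_trans/(_ (card_size _)).
Qed.

Lemma ord4_cover (i j k l m : 'I_4) : uniq [:: i; j; k; l] -> m \in [:: i; j; k; l].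
Proof.
move=> u; apply/negPn/negP => nm.
have /card_uniqP/= card5 : uniq [:: m; i; j; k; l] by rewrite cons_uniq nm u.
by have := max_card (mem [:: m; i; j; k; l]); rewrite card5 card_ord.
Qed.

Lemma ord4_set_cases (i j k l : 'I_4) (X : {set 'I_4}) : uniq [:: i; j; k; l] ->
  0 < #|X| <= 2 -> i \in X -> j \notin X -> [\/ X = [set i], X = [set i; k] | X = [set i; l]].
Proof.
move=> u cardX iX jX.
have [/eqP/cards1P[m EX]|/eqP/cards2P[a [b [nab EX]]]] : #|X| = 1 \/ #|X| = 2.
- by move: cardX; case: #|X| => [|[|[|n]]] // _; [left | right].
- by apply: Or31; move: iX; rewrite EX => /set1P ->.
have [m mX nmi] : exists2 m, m \in X & m != i.
  case: (eqVneq a i) => [eai|nai]; last by exists a; rewrite // EX !inE eqxx.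
  by exists b; rewrite ?EX ?inE ?eqxx ?orbT // -eai eq_sym.
have EX' : X = [set i; m].
  apply/eqP; rewrite eq_sym eqEcard {2}EX !cards2 nab eq_sym nmi leqnn andbT.
  by apply/subsetP => t /set2P[] ->.
move: (ord4_cover m u); rewrite !inE => /or4P[] /eqP em.
- by rewrite em eqxx in nmi.
- by rewrite -em mX in jX.
- by apply: Or32; rewrite EX' em.
- by apply: Or33; rewrite EX' em.
Qed.

Section Backward.
Variables (T : finType) (le : rel T).
Hypothesis Hpo : poset_ax le.
Variable ph : T -> {set 'I_4}.
Hypothesis ph_inj : {in [set: T] &, injective ph}.
Hypothesis ph_img : [set ph x | x in [set: T]] = S3_01.
Hypothesis ph_le : forall x y, x \in [set: T] -> y \in [set: T] -> leS (ph x) (ph y) = le x y.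

Lemma ph_injective : injective ph. Proof. by move=> x y; apply: ph_inj; rewrite inE. Qed.

Lemma le_ph x y : le x y = (ph x \subset ph y). Proof. by rewrite -ph_le ?inE. Qed.

Lemma card_ph t : 0 < #|ph t| <= 2.
Proof.
have : ph t \in S3_01 by rewrite -ph_img imset_f ?inE.
by rewrite inE.
Qed.

Lemma ph_onto (X : {set 'I_4}) : 0 < #|X| <= 2 -> exists t, ph t = X.
Proof.
move=> cardX; have : X \in S3_01 by rewrite inE.
by rewrite -ph_img => /imsetP[t _ ->]; exists t.
Qed.

Definition edge t := #|ph t| == 2.

Lemma vertexP t : ~~ edge t -> exists i, ph t = [set i].
Proof.
by move=> vt; apply/cards1P; move: (card_ph t) vt; rewrite /edge; case: #|ph t| => [|[|[|]]].
Qed.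

Lemma edgeP t : edge t -> exists i j, i != j /\ ph t = [set i; j].
Proof. by move/cards2P. Qed.

Lemma lt_edge p q : lt le p q -> ~~ edge p && edge q.
Proof.
case/andP => npq; rewrite le_ph => sub.
have : ph p \proper ph q by rewrite properEneq sub andbT (inj_eq ph_injective).
by move/proper_card; move: (card_ph p) (card_ph q); rewrite /edge; lia.
Qed.

Lemma vertex_of i : exists l, ph l = [set i].
Proof. by apply: ph_onto; rewrite cards1. Qed.

Lemma vertex_not_edge l i : ph l = [set i] -> ~~ edge l.
Proof. by rewrite /edge => ->; rewrite cards1. Qed.

Lemma le_vertex l u i : ph l = [set i] -> le l u = (i \in ph u).
Proof. by rewrite le_ph => ->; rewrite sub1set. Qed.

Lemma vertex_eq l1 l2 i j : ph l1 = [set i] -> ph l2 = [set j] -> (l1 == l2) = (i == j).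
Proof. by move=> e1 e2; rewrite -(inj_eq ph_injective) e1 e2 (inj_eq set1_inj). Qed.

Lemma edge_has_lower t : edge t -> exists l, lt le l t.
Proof.
case/edgeP => i [j [nij et]]; have [l el] := vertex_of i.
exists l; rewrite /lt (le_vertex _ el) et !inE eqxx andbT.
rewrite -(inj_eq ph_injective) el et.
by apply/eqP => e; move: (cards1 i); rewrite e cards2 nij.
Qed.

Lemma aut_edge s t : isAut le s -> edge (s t) = edge t.
Proof. exact: (aut_hi lt_edge edge_has_lower). Qed.

Lemma edge_above l1 l2 : ~~ edge l1 -> ~~ edge l2 -> l1 != l2 ->
  exists e, [/\ edge e, le l1 e & le l2 e].
Proof.
move=> /vertexP[i e1] /vertexP[j e2]; rewrite (vertex_eq e1 e2) => nij.
have [e ee] : exists e, ph e = [set i; j] by apply: ph_onto; rewrite cards2 nij.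
by exists e; rewrite /edge (le_vertex _ e1) (le_vertex _ e2) ee cards2 nij !inE !eqxx ?orbT.
Qed.

Lemma no_edge_above3 l1 l2 l3 e : ~~ edge l1 -> ~~ edge l2 -> ~~ edge l3 ->
  l1 != l2 -> l1 != l3 -> l2 != l3 -> le l1 e -> le l2 e -> le l3 e -> False.
Proof.
move=> /vertexP[i e1] /vertexP[j e2] /vertexP[k e3].
rewrite (vertex_eq e1 e2) (vertex_eq e1 e3) (vertex_eq e2 e3).
rewrite (le_vertex _ e1) (le_vertex _ e2) (le_vertex _ e3) => nij nik njk ie je ke.
have : #|[set i; j; k]| <= #|ph e| by apply/subset_leq_card/subsetP => m /set3P[] ->.
by rewrite cards3 //; move: (card_ph e); lia.
Qed.

Lemma edge_above_uniq l1 l2 e e' : ~~ edge l1 -> ~~ edge l2 -> l1 != l2 -> edge e -> edge e' ->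
  le l1 e -> le l2 e -> le l1 e' -> le l2 e' -> e = e'.
Proof.
move=> /vertexP[i e1] /vertexP[j e2]; rewrite (vertex_eq e1 e2) => nij.
have ph_pair f : edge f -> le l1 f -> le l2 f -> ph f = [set i; j].
  rewrite (le_vertex _ e1) (le_vertex _ e2) /edge => /eqP cf ifv jfv.
  by apply/eqP; rewrite eq_sym eqEcard cards2 nij cf leqnn andbT; apply/subsetP => m /set2P[] ->.
by move=> ee ee' l1e l2e l1e' l2e'; apply: ph_injective; rewrite !ph_pair.
Qed.

Lemma fourth_vertex l1 l2 l3 : ~~ edge l1 -> ~~ edge l2 -> ~~ edge l3 ->
  exists d, [/\ ~~ edge d, d != l1, d != l2 & d != l3].
Proof.
move=> /vertexP[i e1] /vertexP[j e2] /vertexP[k e3].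
have [m] := ord4_other i j k; have [d ed] := vertex_of m.
rewrite !inE !negb_or => /and3P[nmi nmj nmk].
by exists d; rewrite (vertex_not_edge ed) (vertex_eq ed e1) (vertex_eq ed e2) (vertex_eq ed e3).
Qed.

Lemma vertex_cover4 a b c d l :
  ~~ edge a -> ~~ edge b -> ~~ edge c -> ~~ edge d -> ~~ edge l -> uniq [:: a; b; c; d] ->
  l \in [:: a; b; c; d].
Proof.
move=> /vertexP[i ea] /vertexP[j eb] /vertexP[k ec] /vertexP[m ed] /vertexP[n el] u.
have ui : uniq [:: i; j; k; m].
  move: u; rewrite /= !inE (vertex_eq ea eb) (vertex_eq ea ec) (vertex_eq ea ed).
  by rewrite (vertex_eq eb ec) (vertex_eq eb ed) (vertex_eq ec ed).
have := ord4_cover n ui; rewrite !inE.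
by rewrite -(vertex_eq el ea) -(vertex_eq el eb) -(vertex_eq el ec) -(vertex_eq el ed).
Qed.

Lemma aut_fixing_vertices s : isAut le s -> (forall l, ~~ edge l -> s l = l) -> s = 1%g.
Proof.
move=> auts fixv; apply/permP => t; rewrite perm1.
case: (boolP (edge t)) => [et|/fixv //].
have [i [j [nij ept]]] := edgeP et.
have [[l1 e1] [l2 e2]] := (vertex_of i, vertex_of j).
have [v1 v2] := (vertex_not_edge e1, vertex_not_edge e2).
have [le1 le2] : le l1 t /\ le l2 t.
  by rewrite (le_vertex _ e1) (le_vertex _ e2) ept !inE !eqxx orbT.
apply: (edge_above_uniq v1 v2) => //; rewrite ?(vertex_eq e1 e2) ?aut_edge //.
- by rewrite -[l1 in le l1 _]fixv // auts.
- by rewrite -[l2 in le l2 _]fixv // auts.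
Qed.

Lemma aut_moves_lt_pair s : isAut le s -> s != 1%g ->
  exists p q, [/\ lt le p q, s p != p & s q != q].
Proof.
move=> auts ns.
have [p vp mp] : exists2 p, ~~ edge p & s p != p.
  case: (boolP [exists p, ~~ edge p && (s p != p)]) => [/existsP[p /andP[vp mp]]|/existsPn fixv].
    by exists p.
  by case/eqP: ns; apply: aut_fixing_vertices => // l vl; move: (fixv l); rewrite vl => /negPn/eqP.
have vsp : ~~ edge (s p) by rewrite aut_edge.
have [w [vw nwp nwsp _]] := fourth_vertex vp vsp vsp.
have [e [ee pe we]] : exists e, [/\ edge e, le p e & le w e].
  by apply: edge_above; rewrite // eq_sym.
exists p, e; split => //.
- by rewrite lt_def //; apply: contraNneq vp => ->.
- apply/eqP => se; have spe : le (s p) e by rewrite -se auts.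
  by apply: (no_edge_above3 vp vsp vw _ _ _ pe spe we); rewrite 1?eq_sym.
Qed.

Lemma iter_closed (s : {perm T}) (A : {set T}) t n :
  t \in A -> {in A, forall a, s a \in A} -> iter n s t \in A.
Proof. by move=> tA sA; elim: n => //= n IH; apply: sA. Qed.

Section OrbitCover.
Variables (s : {perm T}) (p q : T).
Hypotheses (s_aut : isAut le s) (lt_pq : lt le p q) (moved_p : s p != p).
Hypothesis cover : forall t, s t != t -> exists n, t = iter n s p \/ t = iter n s q.

Lemma vertex_p : ~~ edge p. Proof. by case/andP: (lt_edge lt_pq). Qed.

Lemma iter_edge n t : edge (iter n s t) = edge t.
Proof. by elim: n => //= n IH; rewrite aut_edge. Qed.

Lemma vertex_orbit (A : {set T}) t : p \in A -> {in A, forall a, s a \in A} ->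
  ~~ edge t -> s t != t -> t \in A.
Proof.
move=> pA sA vt /cover[n [->|etq]]; first exact: iter_closed.
by move: vt; rewrite etq iter_edge; case/andP: (lt_edge lt_pq) => _ ->.
Qed.

Lemma edge_orbit t : edge t -> s t != t -> exists n, t = iter n s q.
Proof.
move=> et /cover[n [etp|->]]; last by exists n.
by move: et; rewrite etp iter_edge (negbTE vertex_p).
Qed.

Lemma fixed_below_orbit w n : s w = w -> le w (iter n s q) = le w q.
Proof. by move=> sw; elim: n => //= n <-; rewrite -{1}sw s_aut. Qed.

Lemma fixed_edge_closed e v : s e = e -> le v e -> le (s v) e.
Proof. by move=> se; rewrite -{2}se s_aut. Qed.

Lemma orbit_cover_fixed_vertex w : ~~ edge w -> s w = w -> False.
Proof.
move=> vw sw; set a := s p.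
have va : ~~ edge a by rewrite /a aut_edge //; apply: vertex_p.
have npa : p != a by rewrite eq_sym.
have nwp : w != p by apply: contraNneq moved_p => <-; rewrite sw.
have nwa : w != a by apply: contraNneq moved_p => ewa; apply/eqP/(@perm_inj _ s); rewrite -/a -ewa.
have moved_above v e : ~~ edge v -> v != p -> v != a -> edge e -> le p e -> le v e -> s e != e.
  move=> vv nvp nva ee pe ve; apply/eqP => se.
  by apply: (no_edge_above3 vertex_p va vv _ _ _ pe (fixed_edge_closed se pe) ve); rewrite 1?eq_sym.
have w_below e : edge e -> s e != e -> le w e.
  move=> ee me; have [n ->] := edge_orbit ee me; rewrite fixed_below_orbit //.
  have [e1 [ee1 pe1 we1]] : exists e, [/\ edge e, le p e & le w e].
    by apply: edge_above; rewrite ?vertex_p // eq_sym.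
  have [n1 e1E] := edge_orbit ee1 (moved_above w e1 vw nwp nwa ee1 pe1 we1).
  by rewrite -(fixed_below_orbit n1 sw) -e1E.
case: (eqVneq (s a) p) => [sap|nsap].
- have [w' [vw' nw'p nw'a nw'w]] := fourth_vertex vertex_p va vw.
  have sw' : s w' = w'.
    apply/eqP/negPn/negP => mw'.
    suff : w' \in [set p; a] by rewrite !inE (negbTE nw'p) (negbTE nw'a).
    apply: vertex_orbit mw'; rewrite ?inE ?eqxx //.
    by move=> t /set2P[] ->; rewrite ?sap !inE eqxx ?orbT.
  have [e2 [ee2 pe2 w'e2]] : exists e, [/\ edge e, le p e & le w' e].
    by apply: edge_above; rewrite ?vertex_p // eq_sym.
  have we2 := w_below e2 ee2 (moved_above w' e2 vw' nw'p nw'a ee2 pe2 w'e2).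
  by apply: (no_edge_above3 vertex_p vw' vw _ _ nw'w pe2 w'e2 we2); rewrite eq_sym.
- have [e [ee pe ae]] := edge_above vertex_p va npa.
  have nasa : a != s a by apply: contraNneq moved_p => /(@perm_inj _ s) epa; rewrite -/a -epa.
  have me : s e != e.
    apply/eqP => se; have sae := fixed_edge_closed se ae.
    have vsa : ~~ edge (s a) by rewrite aut_edge.
    by apply: (no_edge_above3 vertex_p va vsa npa _ nasa pe ae sae); rewrite eq_sym.
  by apply: (no_edge_above3 vertex_p va vw npa _ _ pe ae (w_below e ee me)); rewrite eq_sym.
Qed.

Lemma orbit_four_cycle : (forall l, ~~ edge l -> s l != l) ->
  exists d, [/\ uniq [:: p; s p; s (s p); d], s (s (s p)) = d & s d = p].
Proof.
move=> allm; set a := s p; set b := s a.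
have va : ~~ edge a by rewrite /a aut_edge //; apply: vertex_p.
have vb : ~~ edge b by rewrite /b aut_edge.
have npa : p != a by rewrite eq_sym.
have nab : a != b by rewrite eq_sym; apply: allm.
have in_closed (A : {set T}) t : p \in A -> {in A, forall c, s c \in A} -> ~~ edge t -> t \in A.
  by move=> pA sA vt; apply: vertex_orbit pA sA vt (allm t vt).
have nbp : b != p.
  apply/eqP => bp; have [d [vd ndp nda _]] := fourth_vertex vertex_p va va.
  suff : d \in [set p; a] by rewrite !inE (negbTE ndp) (negbTE nda).
  apply: in_closed vd; rewrite ?inE ?eqxx //.
  by move=> t /set2P[] ->; rewrite -/a -/b ?bp !inE eqxx ?orbT.
have [d [vd ndp nda ndb]] := fourth_vertex vertex_p va vb.
have u4 : uniq [:: p; a; b; d].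
  by rewrite /= !inE !negb_or npa eq_sym nbp (eq_sym p d) ndp nab (eq_sym a d) nda eq_sym ndb.
have in4 c : ~~ edge c -> c \in [:: p; a; b; d].
  by move=> vc; apply: (vertex_cover4 vertex_p va vb vd vc u4).
have sbd : s b = d.
  have /in4 : ~~ edge (s b) by rewrite aut_edge.
  rewrite !inE => /or4P[] /eqP sb //.
  - suff : d \in [set p; a; b] by rewrite !inE (negbTE ndp) (negbTE nda) (negbTE ndb).
    apply: in_closed vd; rewrite ?inE ?eqxx //.
    by move=> t /set3P[] ->; rewrite -/a -/b ?sb !inE eqxx ?orbT.
  - by move: nbp; rewrite (perm_inj sb) eqxx.
  - by move: (allm b vb); rewrite sb eqxx.
exists d; split => //.
have /in4 : ~~ edge (s d) by rewrite aut_edge.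
rewrite !inE => /or4P[] /eqP sd //.
- by move: ndp; rewrite (perm_inj sd) eqxx.
- by move: nda; rewrite (perm_inj sd) eqxx.
- by move: (allm d vd); rewrite sd eqxx.
Qed.

(* The square of the 4-cycle fixes the edge above p and s^2 p, hence the whole orbit of q,
   which also contains the edge above p and s p; but that edge is moved by s^2. *)
Lemma orbit_cover_no_fixed_vertex : (forall l, ~~ edge l -> s l != l) -> False.
Proof.
move=> /orbit_four_cycle[d []]; set a := s p; set b := s a.
rewrite /= !inE !negb_or => /and4P[/and3P[npa npb _] /andP[nab _] _ _] sbd sdp.
have va : ~~ edge a by rewrite /a aut_edge //; apply: vertex_p.
have vb : ~~ edge b by rewrite /b aut_edge.
have [e [ee pe be]] := edge_above vertex_p vb npb.
have [e' [ee' pe' ae']] := edge_above vertex_p va npa.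
have s2e : s (s e) = e.
  apply: (edge_above_uniq vertex_p vb npb); rewrite ?aut_edge //.
  - by rewrite -[p in le p _]sdp -sbd !s_aut.
  - by rewrite /b /a !s_aut.
have me : s e != e.
  apply/eqP => se; have ae : le a e by rewrite fixed_edge_closed.
  exact: (no_edge_above3 vertex_p va vb npa npb nab pe ae be).
have me' : s e' != e'.
  apply/eqP => se'; have be' : le b e' by rewrite fixed_edge_closed.
  exact: (no_edge_above3 vertex_p va vb npa npb nab pe' ae' be').
have iter_s k x : s (iter k s x) = iter k s (s x) by rewrite -iterS iterSr.
have [[n En] [m Em]] := (edge_orbit ee me, edge_orbit ee' me').
have s2q : s (s q) = q by apply: (@perm_inj _ (s ^+ n)%g); rewrite !permX -!iter_s -En s2e.
have s2e' : s (s e') = e' by rewrite Em !iter_s s2q.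
have be' : le b e' by rewrite -s2e' /b /a !s_aut.
exact: (no_edge_above3 vertex_p va vb npa npb nab pe' ae' be').
Qed.

Lemma orbit_cover_false : False.
Proof.
case: (boolP [exists w, ~~ edge w && (s w == w)]) => [/existsP[w /andP[vw /eqP sw]]|].
  exact: orbit_cover_fixed_vertex vw sw.
move/existsPn => nofix; apply: orbit_cover_no_fixed_vertex => l vl.
by move: (nofix l); rewrite vl.
Qed.

End OrbitCover.

Lemma small_generator_trivial (B' : {set 'I_3}) r' s S :
  generator_fam le leV B' r' s S -> #|B'| < 3 -> s = 1%g.
Proof.
move=> [r2 auts famS iso _] cardB; apply/eqP/negPn/negP => ns.
have r0 : 0 < r' by lia.
have [p0 [q0 [lt0 m0 n0]]] := aut_moves_lt_pair auts ns.
have [[_ ellS0] [_ cov]] := (famS.1 0 r0, famS.2).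
have ellSig : ell le (Sigma s) = 2.
  by apply: (ell_eq2 Hpo lt_edge (p := p0) (q := q0)); rewrite ?inE.
have [p [q [pS qS ltpq]]] : exists p q, [/\ p \in S 0, q \in S 0 & lt le p q].
  by apply: ell_gt1P; rewrite ellS0 ellSig.
have S0E : S 0 = [set p; q].
  have [h [hinj [himg _]]] := iso 0 r0.
  apply/eqP; rewrite eq_sym eqEcard cards2 (lt_neq ltpq) -(card_in_imset hinj) himg.
  by rewrite (_ : #|B'| <= 2) ?andbT; [apply/subsetP => t /set2P[] -> | lia].
apply: (orbit_cover_false auts ltpq).
- by apply: fam_ok_moved famS r0 _; rewrite S0E !inE eqxx.
- move=> t mt; have /cov[i ir] : t \in Sigma s by rewrite inE.
  rewrite (fam_ok_iter famS ir) S0E => /imsetP[t' /set2P[] -> ->]; exists i; by [left | right].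
Qed.

Definition induced_fun (pi : {perm 'I_4}) (t : T) : T :=
  odflt t [pick t' | ph t' == pi @: ph t].

Lemma ph_induced_fun pi t : ph (induced_fun pi t) = pi @: ph t.
Proof.
have [t0 et0] : exists t0, ph t0 = pi @: ph t.
  by apply: ph_onto; rewrite card_imset ?card_ph //; apply: perm_inj.
rewrite /induced_fun; case: pickP => [t' /eqP //|none].
by move: (none t0); rewrite et0 eqxx.
Qed.

Lemma induced_fun_inj pi : injective (induced_fun pi).
Proof.
move=> a b eab; apply: ph_injective; apply: (imset_inj (@perm_inj _ pi)).
by rewrite -!ph_induced_fun eab.
Qed.

Definition induced pi := perm (@induced_fun_inj pi).

Lemma ph_induced pi t : ph (induced pi t) = pi @: ph t.
Proof. by rewrite permE ph_induced_fun. Qed.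

Lemma induced_aut pi : isAut le (induced pi).
Proof. by move=> a b; rewrite !le_ph !ph_induced imset_perm_subset. Qed.

Lemma induced_tpermK i j : involutive (induced (tperm i j)).
Proof.
move=> t; apply: ph_injective; rewrite !ph_induced -imset_comp.
by rewrite (eq_imset _ (tpermK i j)) imset_id.
Qed.

Definition side (i j : 'I_4) := [set t | (i \in ph t) && (j \notin ph t)].

Lemma side_vee i j : i != j -> vee_set le (side i j).
Proof.
move=> nij; have [k] := ord4_other i j j; have [l] := ord4_other i j k.
rewrite !inE !negb_or => /and3P[nli nlj nlk] /and3P[nki nkj _].
have u : uniq [:: i; j; k; l].
  by rewrite /= !inE !negb_or nij !(eq_sym i) nki nli !(eq_sym j) nkj nlj eq_sym nlk.
have [v ev] := vertex_of i.
have [ek eek] : exists t, ph t = [set i; k] by apply: ph_onto; rewrite cards2 eq_sym nki.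
have [el eel] : exists t, ph t = [set i; l] by apply: ph_onto; rewrite cards2 eq_sym nli.
have nle a b m : m \in ph a -> m \notin ph b -> ~~ le a b.
  by move=> ma mb; rewrite le_ph; apply: contraNN mb => /subsetP; apply.
have nle_neq a b : ~~ le a b -> a != b by apply: contraNneq => ->; rewrite le_refl.
have lt_v e m : ph e = [set i; m] -> m != i -> lt le v e.
  move=> ee nmi; rewrite /lt (le_vertex _ ev) ee !inE eqxx andbT eq_sym.
  by apply: (nle_neq _ _ (nle e v m _ _)); rewrite ?ee ?ev !inE ?eqxx ?orbT.
have nle_kl : ~~ le ek el.
  by apply: (nle _ _ k); rewrite ?eek ?eel !inE ?eqxx ?orbT // negb_or nki eq_sym.
have nle_lk : ~~ le el ek.
  by apply: (nle _ _ l); rewrite ?eek ?eel !inE ?eqxx ?orbT // negb_or nli.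
exists v, ek, el; split; last first.
  by split; [exact: lt_v eek nki | exact: lt_v eel nli | exact: nle_neq nle_kl | |].
apply/setP => t; rewrite inE; apply/andP/set3P => [[it jt]|[] ->].
- by case: (ord4_set_cases u (card_ph t) it jt) => et; [apply: Or31 | apply: Or32 | apply: Or33];
    apply: ph_injective; rewrite et.
- by rewrite ev !inE eqxx eq_sym.
- by rewrite eek !inE eqxx negb_or !(eq_sym j) nij nkj.
- by rewrite eel !inE eqxx negb_or !(eq_sym j) nij nlj.
Qed.

Lemma induced_tperm_side i j : induced (tperm i j) @: side i j = side j i.
Proof.
apply/setP => t; rewrite -{1}(induced_tpermK i j t) mem_imset; last exact: perm_inj.
by rewrite !inE ph_induced !mem_imset_tperm tpermL tpermR andbC.
Qed.

Lemma Sigma_induced_tperm i j : Sigma (induced (tperm i j)) = side i j :|: side j i.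
Proof.
apply/setP => t; rewrite !inE -(inj_eq ph_injective) ph_induced imset_tperm_eq.
by case: (i \in ph t); case: (j \in ph t).
Qed.

Definition tperm_family (i j : 'I_4) (n : nat) := if n == 0 then side i j else side j i.

Lemma tperm_generator i j : i != j ->
  generator_fam le leV [set: 'I_3] 2 (induced (tperm i j)) (tperm_family i j).
Proof.
move=> nij; apply: (vee_generator_of_swap Hpo lt_edge).
- exact: induced_aut.
- exact: side_vee.
- by apply: side_vee; rewrite eq_sym.
- exact: induced_tperm_side.
- by rewrite tpermC induced_tperm_side.
- exact: Sigma_induced_tperm.
- rewrite -setI_eq0; apply/eqP/setP => t; rewrite !inE.
  by case: (i \in ph t); case: (j \in ph t).
Qed.

Lemma tperm_step ok i j t : i != j -> ok (induced (tperm i j)) -> t \in side i j ->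
  R1_by le leV ok [set: 'I_3] 2 t (induced (tperm i j) t).
Proof.
move=> nij okij tS; exists (induced (tperm i j)), (tperm_family i j), 0, 1, 1.
split; split => //; first exact: tperm_generator.
- rewrite /tperm_family /=; apply/eqP => /setP/(_ t); move: tS.
  by rewrite !inE => /andP[-> /negbTE->].
- by rewrite /tperm_family /= -induced_tperm_side imset_f.
Qed.

Section Connected.
Variable ok : {perm T} -> Prop.
Hypothesis ok_tperm : forall i j, i != j -> ok (induced (tperm i j)).
Local Notation C := (clos_refl_sym_trans T (R1_by le leV ok [set: 'I_3] 2)).

Lemma swap_step i j t : i != j -> i \in ph t -> j \notin ph t -> C t (induced (tperm i j) t).
Proof.
move=> nij it jt; apply/rst_step/tperm_step => //; first exact: ok_tperm.
by rewrite inE it jt.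
Qed.

Lemma vertices_connected l1 l2 : ~~ edge l1 -> ~~ edge l2 -> C l1 l2.
Proof.
move=> /vertexP[i e1] /vertexP[j e2].
case: (eqVneq i j) => [eij|nij].
  have -> : l2 = l1 by apply: ph_injective; rewrite e1 e2 eij.
  exact: rst_refl.
have -> : l2 = induced (tperm i j) l1.
  by apply: ph_injective; rewrite ph_induced e1 imset_set1 tpermL e2.
by apply: swap_step; rewrite // e1 !inE ?eqxx // eq_sym.
Qed.

Lemma edge_swap_step t a b c : ph t = [set a; b] -> a != b -> c != a -> c != b ->
  exists2 t', ph t' = [set c; b] & C t t'.
Proof.
move=> et nab nca ncb; exists (induced (tperm a c) t).
  by rewrite ph_induced et imsetU1 imset_set1 tpermL tpermD // eq_sym.
by apply: swap_step; rewrite 1?eq_sym // et !inE ?eqxx // negb_or nca.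
Qed.

Lemma edges_connected t1 t2 : edge t1 -> edge t2 -> C t1 t2.
Proof.
move=> /edgeP[a [b [nab e1]]] /edgeP[c [d [ncd e2]]].
have [t' [b' nb'c e'] C1] : exists2 t', exists2 b', b' != c & ph t' = [set c; b'] & C t1 t'.
  case: (eqVneq c a) => [eca|nca].
    by exists t1; [exists b; rewrite ?e1 eca // eq_sym | apply: rst_refl].
  case: (eqVneq c b) => [ecb|ncb].
    by exists t1; [exists a; rewrite ?e1 ecb // setUC | apply: rst_refl].
  by have [t' e' Ct'] := edge_swap_step e1 nab nca ncb; exists t' => //; exists b; rewrite 1?eq_sym.
apply: rst_trans C1 _; case: (eqVneq d b') => [edb|ndb'].
  have -> : t2 = t' by apply: ph_injective; rewrite e2 e' edb.
  exact: rst_refl.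
have e'' : ph t' = [set b'; c] by rewrite e' setUC.
have ndc : d != c by rewrite eq_sym.
have [t'' e3 C2] := edge_swap_step e'' nb'c ndb' ndc.
by have -> : t2 = t'' by apply: ph_injective; rewrite e2 e3 setUC.
Qed.

Lemma same_level_connected x y : edge x = edge y -> C x y.
Proof.
case: (boolP (edge x)) => [ex /esym ey|vx /esym/negbT vy].
- exact: edges_connected.
- exact: vertices_connected.
Qed.

End Connected.

Lemma tperm_prime i j : i != j -> prime_ok le leV [set: 'I_3] 2 (induced (tperm i j)).
Proof.
move=> nij; have iso : iso_sub le (side i j) leV [set: 'I_3].
  by have [x [y [z [-> V]]]] := side_vee nij; apply: iso_vee.
exists (side i j); split => //.
- by apply: (@linked_two_level _ _ edge); apply: lt_edge.
- split; first by exists (tperm_family i j); apply: tperm_generator.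
  move=> b []; have [p [q [r [-> /lt_edge/andP[vp eq] _ _]]]] := iso_vee_triple iso.
  case: (boolP (edge b)) => eb; [exists q | exists p]; rewrite ?inE ?eqxx ?orbT //;
    apply: (same_level_connected (ok := fun _ => True)) => //;
    by rewrite ?eb ?eq ?(negbTE eb) ?(negbTE vp).
case=> B' [r' [S' [r2 [A' [_ _ symE]] [x Sx] _ small]]].
have cardB : #|B'| < 3.
  by case: small => [/proper_card|[_ ?]]; rewrite ?cardsT ?card_ord //; lia.
have [g [gen_g gx]] := (symE x).1 Sx.
suff g1 : g = 1%g by rewrite g1 perm1 eqxx in gx.
by elim: gen_g {gx} => // s t [[S gen] _] _ ->; rewrite (small_generator_trivial gen cardB) mulg1.
Qed.

Definition level t : 'I_2 := if edge t then ord_max else ord0.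

Lemma level_eq x y : (level x = level y) <-> (edge x = edge y).
Proof. by rewrite /level; split; case: (edge x); case: (edge y). Qed.

Lemma backward_retract : retract_prime_iso le leV 2 leC2.
Proof.
have [v0 ev0] := vertex_of ord0; have vv0 := vertex_not_edge ev0.
have [w ew] : exists w, ph w = [set ord0; ord_max] by apply: ph_onto; rewrite cards2.
have ewe : edge w by rewrite /edge ew cards2.
exists level; split; [|split].
- by case=> -[|[|//]] ?; [exists v0 | exists w]; apply: val_inj; rewrite /level ?(negbTE vv0) ?ewe.
- move=> x y; rewrite level_eq; split.
    exact: (same_level_connected (ok := prime_ok le leV [set: 'I_3] 2) tperm_prime).
  by case/clos_R1_aut_related => g autg <-; rewrite aut_edge.
move=> u v; split => [|[x [y [<- <- lexy]]]]; last first.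
  case: (eqVneq x y) => [->|nxy]; first by rewrite /leC2.
  by have /andP[vx ey] := lt_edge (lt_def lexy nxy); rewrite /leC2 /level (negbTE vx) ey.
have [l ll] := edge_has_lower ewe; have /andP[vl _] := lt_edge ll.
case: u => -[|[|//]] ?; case: v => -[|[|//]] ? //= _.
- by exists v0, v0; split; rewrite ?le_refl //; apply: val_inj; rewrite /level (negbTE vv0).
- by exists l, w; split; rewrite ?(ltW ll) //; apply: val_inj; rewrite /level ?ewe ?(negbTE vl).
- by exists w, w; split; rewrite ?le_refl //; apply: val_inj; rewrite /level ewe.
Qed.

Lemma backward_not_C2 : ~ iso_sub le [set: T] leC2 [set: 'I_2].
Proof.
move=> [h [hinj _]]; have [[v0 e0] [v1 e1]] := (vertex_of ord0, vertex_of ord_max).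
have [vv0 vv1] := (vertex_not_edge e0, vertex_not_edge e1).
have [v2 [vv2 n20 n21 _]] := fourth_vertex vv0 vv1 vv1.
have n01 : v0 != v1 by rewrite (vertex_eq e0 e1).
have := max_card (mem (h @: [set v0; v1; v2])).
rewrite card_ord card_in_imset ?(cards3 n01 (contra_neq esym n20) (contra_neq esym n21)) //.
by move=> a b _ _; apply: hinj; rewrite inE.
Qed.

End Backward.

Theorem mainTheorem12 (T : finType) (le : rel T) :
  poset_ax le ->
  ((retract_prime_iso le leV 2 leC2 /\ ~ iso_sub le [set: T] leC2 [set: 'I_2])
   <-> iso_sub le [set: T] leS S3_01).
Proof.
move=> Hpo; split.
- by case=> -[f [f_surj [f_eq f_le]]] not_C2; apply: (forward_iso Hpo f_surj f_eq f_le not_C2).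
- case=> ph [ph_inj [ph_img ph_le]]; split.
  + exact: (backward_retract Hpo ph_inj ph_img ph_le).
  + exact: (backward_not_C2 ph_inj ph_img).
Qed.
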